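(* Let $S$ be a numerical semigroup with a unique Betti element. Then $S$ is telescopic and $\mathrm{Ap}(S)$ is $\alpha$-rectangular. Moreover, the converses fail: $S=\langle 4,6,13\rangle$ is associated to a plane branch (hence telescopic with $\alpha$-rectangular Apéry set) but does not have a unique Betti element.
   Context: A numerical semigroup is a submonoid $S$ of $(\mathbb N,+)$ with finite complement in $\mathbb N$; $g_1<\dots<g_\nu$ is its minimal system of generators, $m=g_1$, and $\mathrm{Ap}(S)=\{s\in S: s-m\notin S\}$. For $i=2,\dots,\nu$: $\tau_i=\min\{h\in\mathbb N: hg_i\in\langle g_1,\dots,g_{i-1}\rangle\}-1$ and $\alpha_i=\max\{h\in\mathbb N: hg_i\in\mathrm{Ap}(S)\}$. $S$ is telescopic if $\mathrm{Ap}(S)=\{\sum_{i=2}^\nu\lambda_ig_i: 0\le\lambda_i\le\tau_i\}$; $S$ is associated to a plane branch if it is telescopic and $(\tau_i+1)g_i<g_{i+1}$ for all $i=2,\dots,\nu-1$; $\mathrm{Ap}(S)$ is $\alpha$-rectangular if $\mathrm{Ap}(S)=\{\sum_{i=2}^\nu\lambda_ig_i: 0\le\lambda_i\le\alpha_i\}$. $S$ has a unique Betti element if (equivalently) there exist pairwise coprime integers $a_1,\dots,a_\nu>1$ with $g_i=\prod_{j\ne i}a_j$ for all $i$. *)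

(* Numerical semigroups over nat. Indices of the minimal
   generating system are 0-based: nth 0 g 0 = m = g_1 of the paper, and the
   paper's indices i = 2..nu correspond to 1 <= i < size g here. *)
From mathcomp Require Import all_boot.
Set Implicit Arguments. Unset Strict Implicit. Unset Printing Implicit Defensive.

Definition is_numsg (S : pred nat) : Prop :=
  [/\ S 0, (forall a b, S a -> S b -> S (a + b)) &
      exists N, forall n, N <= n -> S n].

Definition minimal_gens (S : pred nat) (g : seq nat) : Prop :=
  sorted ltn g /\
  forall x, x \in g <->
    [/\ 0 < x, S x &
        ~ exists a b, [/\ 0 < a, 0 < b, S a, S b & x = a + b]].

(* membership in the submonoid <s> of (N,+) generated by a list s *)
Fixpoint inSG (s : seq nat) (n : nat) : bool :=
  match s with
  | [::] => n == 0
  | a :: s' => has (fun k => (k * a <= n) && inSG s' (n - k * a)) (iota 0 n.+1)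
  end.

Definition apery (S : pred nat) (g : seq nat) (s : nat) : bool :=
  S s && ((s < nth 0 g 0) || ~~ S (s - nth 0 g 0)).

(* t = tau_i = min{h >= 1 : h g_i in <g_1,...,g_{i-1}>} - 1  (0-based i) *)
Definition is_tau (g : seq nat) (i t : nat) : Prop :=
  inSG (take i g) (t.+1 * nth 0 g i) /\
  forall h, 0 < h -> inSG (take i g) (h * nth 0 g i) -> t.+1 <= h.

Definition is_alpha (S : pred nat) (g : seq nat) (i a : nat) : Prop :=
  apery S g (a * nth 0 g i) /\ forall h, apery S g (h * nth 0 g i) -> h <= a.

Definition apery_box (S : pred nat) (g : seq nat) (bnd : nat -> nat) : Prop :=
  forall s, apery S g s <->
    exists lam : nat -> nat,
      (forall i, 0 < i < size g -> lam i <= bnd i) /\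
      s = \sum_(1 <= i < size g) lam i * nth 0 g i.

Definition telescopic (S : pred nat) (g : seq nat) : Prop :=
  exists tau : nat -> nat,
    (forall i, 0 < i < size g -> is_tau g i (tau i)) /\ apery_box S g tau.

Definition plane_branch (S : pred nat) (g : seq nat) : Prop :=
  exists tau : nat -> nat,
    [/\ (forall i, 0 < i < size g -> is_tau g i (tau i)),
        apery_box S g tau &
        forall i, 0 < i -> i.+1 < size g -> (tau i).+1 * nth 0 g i < nth 0 g i.+1].

Definition alpha_rectangular (S : pred nat) (g : seq nat) : Prop :=
  exists alpha : nat -> nat,
    (forall i, 0 < i < size g -> is_alpha S g i (alpha i)) /\
    apery_box S g alpha.

(* unique Betti element, via the characterization given in the paper:
   pairwise coprime a_1..a_nu > 1 with g_i = prod_{j <> i} a_j *)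
Definition unique_betti (g : seq nat) : Prop :=
  exists a : nat -> nat,
    [/\ (forall i, i < size g -> 1 < a i),
        (forall i j, i < size g -> j < size g -> i != j -> coprime (a i) (a j)) &
        forall i, i < size g -> nth 0 g i = \prod_(0 <= j < size g | j != i) a j].

From mathcomp Require Import all_boot zify.
From Stdlib Require Import Classical.
Set Implicit Arguments. Unset Strict Implicit.

(* Let g_0 < ... < g_n be the minimal generators of S and suppose
   g_i = prod_{j <> i} a_j with pairwise coprime a_j > 1.  Then
   a_i g_i = P := prod_j a_j for every i, and a_j divides every g_i with
   i <> j while being coprime to g_j.
   (1) Normal form: any combination sum c_i g_i can be rewritten as
       c g_0 + sum_{i>=1} lam_i g_i with lam_i < a_i, by trading a_i g_i
       for a_0 g_0 (both equal P).
   (2) Uniqueness: reducing modulo a_j (j >= 1) determines lam_j, so two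
       such normal forms with the same value have the same lam_i and c.
   (3) Hence Ap(S) is exactly the box { sum_{i>=1} lam_i g_i : lam_i <= a_i - 1 }.
   (4) tau_i = a_i - 1 (a_i g_i = a_0 g_0, and a_i must divide h whenever
       h g_i is in <g_0..g_{i-1}>) and alpha_i = a_i - 1 (a_i g_i - g_0 is in S),
       so S is telescopic and Ap(S) is alpha-rectangular.
   The counterexample <4,6,13> is handled by direct computation: its Apery
   set is {0,6,13,19}, tau = alpha = (1,1), 2*6 < 13, and 13 being prime
   forbids a factorization 13 = a_0 a_1 with a_0, a_1 > 1. *)

Definition combination (s : seq nat) (x : nat) : Prop :=
  exists c : nat -> nat, x = \sum_(0 <= i < size s) c i * nth 0 s i.

Lemma sum_single (g : seq nat) m n k y : m <= k < n ->
  \sum_(m <= i < n) ((i == k) * y) * nth 0 g i = y * nth 0 g k.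
Proof.
move=> hk; rewrite (bigD1_seq k) ?mem_iota ?iota_uniq //=; last by lia.
by rewrite eqxx big1 ?addn0 ?mul1n // => i /negbTE ->; rewrite mul0n.
Qed.

Lemma inSGP s x : inSG s x <-> combination s x.
Proof.
elim: s x => [|a s IH] x.
  split; first by move/eqP->; exists (fun _ => 0); rewrite big_geq.
  by case=> c ->; rewrite big_geq.
split.
  move=> /hasP [k _ /andP [hk /IH [c hc]]].
  exists (fun i => if i is i'.+1 then c i' else k).
  rewrite big_ltn //= big_add1 /= -hc; lia.
case=> c hx.
set r := \sum_(0 <= i < size s) c i.+1 * nth 0 s i.
have hsplit : x = c 0 * a + r by rewrite hx big_ltn //= big_add1.
have hr : inSG s r by apply/IH; exists (fun i => c i.+1).
apply/hasP; case: (posnP a) => [a0|apos].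
  exists 0; first by rewrite mem_iota.
  by rewrite mul0n leq0n subn0 hsplit a0 muln0 add0n.
exists (c 0); first by rewrite mem_iota; nia.
by rewrite hsplit leq_addr /= addKn.
Qed.

Section NumericalSemigroup.
Variables (S : pred nat) (g : seq nat).
Hypotheses (numsgS : is_numsg S) (gensS : minimal_gens S g).

Lemma numsg_add x y : S x -> S y -> S (x + y).
Proof. by case: numsgS => _ SD _; apply: SD. Qed.

Lemma numsg_mul k y : S y -> S (k * y).
Proof.
move=> Sy; elim: k => [|k IH]; first by case: numsgS.
by rewrite mulSn; apply: numsg_add.
Qed.

(* The nth default 0 lies in S as well, so no bound on i is needed. *)
Lemma gen_in_S i : S (nth 0 g i).
Proof.
case: (ltnP i (size g)) => hi; last by rewrite nth_default //; case: numsgS.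
by have [] := (gensS.2 _).1 (mem_nth 0 hi).
Qed.

Lemma numsg_sum m n c : S (\sum_(m <= i < n) c i * nth 0 g i).
Proof.
apply: (big_ind S); [by case: numsgS | exact: numsg_add |].
by move=> i _; apply/numsg_mul/gen_in_S.
Qed.

(* Every element of S is a combination of the minimal generators:
   strong induction, splitting non-generators as a sum of two smaller ones. *)
Lemma numsg_combination x : S x -> combination g x.
Proof.
elim: x {-2}x (leqnn x) => [|n IH] x hx Sx.
  by exists (fun _ => 0); rewrite big1 //; lia.
case: (posnP x) => [->|xpos]; first by exists (fun _ => 0); rewrite big1.
case: (boolP (x \in g)) => xg.
  exists (fun i => (i == index x g) * 1).
  by rewrite sum_single ?mul1n ?nth_index // index_mem xg.
have [a [b [a0 b0 Sa Sb hab]]] :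
    exists a b, [/\ 0 < a, 0 < b, S a, S b & x = a + b].
  by apply: NNPP => hne; move/negP: xg; apply; apply/gensS.2.
subst x.
have [ca ->] := IH a ltac:(lia) Sa.
have [cb ->] := IH b ltac:(lia) Sb.
exists (fun i => ca i + cb i).
by rewrite -big_split /=; apply: eq_bigr => i _; rewrite mulnDl.
Qed.

(* S contains positive elements, so it has at least one generator. *)
Lemma gens_nonempty : 0 < size g.
Proof.
have [_ _ [N hN]] := numsgS.
have [c] := numsg_combination (hN N.+1 (leqnSn N)).
by case: (posnP (size g)) => // ->; rewrite big_geq.
Qed.

Lemma multiplicity_gt0 : 0 < nth 0 g 0.
Proof. by have [] := (gensS.2 _).1 (mem_nth 0 gens_nonempty). Qed.

Lemma apery_addm x : S x -> ~~ apery S g (x + nth 0 g 0).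
Proof.
by move=> Sx; rewrite /apery addnK Sx ltnNge leq_addl andbF.
Qed.

End NumericalSemigroup.

Section UniqueBetti.
Variables (g : seq nat) (a : nat -> nat).
Hypotheses (a_gt1 : forall i, i < size g -> 1 < a i)
  (a_coprime : forall i j, i < size g -> j < size g -> i != j ->
     coprime (a i) (a j))
  (gen_prod : forall i, i < size g ->
     nth 0 g i = \prod_(0 <= j < size g | j != i) a j).

Local Notation n := (size g).
Local Notation P := (\prod_(0 <= j < size g) a j).

Lemma a_gen_prod i : i < n -> a i * nth 0 g i = P.
Proof.
move=> hi; rewrite gen_prod // [RHS](bigD1_seq i) ?mem_iota ?iota_uniq //=.
lia.
Qed.

Lemma a_dvd_gen i j : j < n -> i != j -> a j %| nth 0 g i.
Proof.
move=> hj hij; case: (ltnP i n) => hi; last by rewrite nth_default.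
rewrite gen_prod // -big_filter (bigD1_seq j) /=.
- exact: dvdn_mulr.
- by rewrite mem_filter mem_iota eq_sym hij /=; lia.
- by rewrite filter_uniq ?iota_uniq.
Qed.

Lemma a_coprime_gen i : i < n -> coprime (a i) (nth 0 g i).
Proof.
move=> hi; rewrite coprime_sym gen_prod // big_seq_cond.
apply: (big_ind (fun x => coprime x (a i))); first exact: coprime1n.
  by move=> x y hx hy; rewrite coprimeMl hx hy.
by move=> j /andP [hj hji]; apply: a_coprime => //; move: hj; rewrite mem_iota; lia.
Qed.

Lemma normal_form c : 0 < n ->
  exists c0 (lam : nat -> nat), (forall i, 0 < i < n -> lam i < a i) /\
   \sum_(0 <= i < n) c i * nth 0 g i =
   c0 * nth 0 g 0 + \sum_(1 <= i < n) lam i * nth 0 g i.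
Proof.
move=> n0.
exists (c 0 + \sum_(1 <= i < n) (c i %/ a i) * a 0), (fun i => c i %% a i).
split; first by move=> i hi; rewrite ltn_mod; have := a_gt1 (i := i); lia.
rewrite big_ltn // mulnDl big_distrl /= -addnA; congr (_ + _).
rewrite -big_split /=; apply: eq_big_nat => i hi.
rewrite {1}(divn_eq (c i) (a i)) mulnDl -mulnA a_gen_prod; last by lia.
by rewrite -(a_gen_prod n0) mulnA.
Qed.

Lemma normal_form_mod c lam j : 0 < j < n ->
  c * nth 0 g 0 + \sum_(1 <= i < n) lam i * nth 0 g i =
  lam j * nth 0 g j %[mod a j].
Proof.
move=> hj; rewrite (bigD1_seq j) ?mem_iota ?iota_uniq //=; last by lia.
have /dvdnP [K ->] :
    a j %| \sum_(i <- index_iota 1 n | i != j) lam i * nth 0 g i.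
  by apply: dvdn_sum => i hij; apply/dvdn_mull/a_dvd_gen; lia.
have /dvdnP [K0 ->] : a j %| nth 0 g 0 by apply: a_dvd_gen; lia.
by rewrite addnCA mulnA -mulnDl addnC modnMDl.
Qed.

Lemma mul_mod_inj (x y G d : nat) : coprime d G -> x < d -> y < d ->
  x * G = y * G %[mod d] -> x = y.
Proof.
wlog le : x y / x <= y.
  move=> W hc hx hy he; case: (leqP x y) => h; first exact: W.
  by symmetry; apply: W => //; lia.
move=> hc hx hy /eqP; rewrite eq_sym eqn_mod_dvd ?leq_mul2r ?le ?orbT //.
rewrite -mulnBl Gauss_dvdl //; case: (posnP (y - x)) => h; first lia.
move/(dvdn_leq h); lia.
Qed.

(* Step (2): uniqueness of normal forms; in particular no positive multiple
   of g_0 can be absorbed into a box element. *)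
Lemma normal_form_unique c lam mu : 0 < nth 0 g 0 ->
  (forall i, 0 < i < n -> lam i < a i) ->
  (forall i, 0 < i < n -> mu i < a i) ->
  c * nth 0 g 0 + \sum_(1 <= i < n) lam i * nth 0 g i =
  \sum_(1 <= i < n) mu i * nth 0 g i -> c = 0.
Proof.
move=> m0 hl hm he.
have same_coeff j : 0 < j < n -> lam j = mu j.
  move=> hj; apply: (mul_mod_inj (a_coprime_gen _)) (hl j hj) (hm j hj) _.
    by lia.
  by rewrite -(normal_form_mod c) // he -(normal_form_mod 0).
suff: \sum_(1 <= i < n) lam i * nth 0 g i = \sum_(1 <= i < n) mu i * nth 0 g i.
  by move=> e; rewrite e in he; nia.
by apply: eq_big_nat => i hi; rewrite same_coeff.
Qed.

Lemma a_dvd_prefix i x : i < n -> combination (take i g) x -> a i %| x.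
Proof.
move=> hi [c ->]; rewrite size_take_min big_seq; apply: dvdn_sum => k.
rewrite mem_iota => hk; apply: dvdn_mull; rewrite nth_take; last by lia.
by apply: a_dvd_gen => //; lia.
Qed.

Lemma tau_unique_betti i : 0 < i < n -> is_tau g i (a i).-1.
Proof.
move=> hi; have ai_gt0 : 0 < a i by have := a_gt1 (i := i); lia.
rewrite /is_tau prednK //; split.
  apply/inSGP; exists (fun k => (k == 0) * a 0).
  rewrite size_take_min sum_single; last by lia.
  by rewrite nth_take ?a_gen_prod //; lia.
move=> h hpos /inSGP /(@a_dvd_prefix i) hdvd.
have : a i %| h * nth 0 g i by apply: hdvd; lia.
by rewrite Gauss_dvdl ?a_coprime_gen; [apply: dvdn_leq | lia | lia].
Qed.

Section Apery.
Variable S : pred nat.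
Hypotheses (numsgS : is_numsg S) (gensS : minimal_gens S g).

Lemma apery_unique_betti : apery_box S g (fun i => (a i).-1).
Proof.
have n0 := gens_nonempty numsgS gensS.
have m0 := multiplicity_gt0 numsgS gensS.
move=> s; split.
  case/andP=> Ss hap.
  have [c hc] := numsg_combination gensS Ss.
  have [c0 [lam [hl e]]] := normal_form c n0; rewrite e in hc.
  case: (posnP c0) => [c00|c0pos].
    exists lam; split; last by rewrite hc c00 mul0n add0n.
    by move=> i hi; have := hl i hi; lia.
  have hs : s = ((c0 - 1) * nth 0 g 0 + \sum_(1 <= i < n) lam i * nth 0 g i)
                + nth 0 g 0 by rewrite hc mulnBl mul1n; nia.
  have /negP := apery_addm g (numsg_add numsgS
    (numsg_mul numsgS (c0 - 1) (gen_in_S numsgS gensS 0))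
    (numsg_sum numsgS gensS 1 n lam)).
  by rewrite -hs /apery Ss hap.
case=> mu [hmu ->]; rewrite /apery numsg_sum //=.
case: ltnP => //= hge; apply/negP => Ss.
have [c hc] := numsg_combination gensS Ss.
have [c0 [lam [hl e]]] := normal_form c n0; rewrite e in hc.
suff : c0.+1 = 0 by [].
apply: (normal_form_unique (mu := mu) m0 hl).
  by move=> i hi; have := hmu i hi; have := a_gt1 (i := i); lia.
by rewrite mulSn -addnA -hc; lia.
Qed.

(* Step (4b): alpha_i = a_i - 1, since a_i g_i - g_0 = (a_0 - 1) g_0 lies in S. *)
Lemma alpha_unique_betti i : 0 < i < n -> is_alpha S g i (a i).-1.
Proof.
move=> hi; split.
  apply/apery_unique_betti; exists (fun k => (k == i) * (a i).-1); split.
    by move=> k hk; case: eqP => [->|_]; rewrite ?mul1n ?mul0n.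
  by rewrite sum_single.
move=> h hap; rewrite leqNgt; apply/negP => hlt.
have [ai_gt0 a0_gt0] : 0 < a i /\ 0 < a 0.
  by have := a_gt1 (i := i); have := a_gt1 (i := 0); lia.
have hs : h * nth 0 g i =
    ((h - a i) * nth 0 g i + (a 0).-1 * nth 0 g 0) + nth 0 g 0.
  have e0 := a_gen_prod (gens_nonempty numsgS gensS).
  have ei := a_gen_prod (i := i) ltac:(lia).
  have : a i * nth 0 g i <= h * nth 0 g i by apply: leq_mul; lia.
  by rewrite mulnBl; nia.
have /negP := apery_addm g (numsg_add numsgS
  (numsg_mul numsgS (h - a i) (gen_in_S numsgS gensS i))
  (numsg_mul numsgS (a 0).-1 (gen_in_S numsgS gensS 0))).
by rewrite -hs => /(_ hap).
Qed.

End Apery.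
End UniqueBetti.

Theorem unique_betti_telescopic_rectangular (S : pred nat) (g : seq nat) :
  is_numsg S -> minimal_gens S g -> unique_betti g ->
  telescopic S g /\ alpha_rectangular S g.
Proof.
move=> numsgS gensS [a [a_gt1 a_coprime gen_prod]].
have box := apery_unique_betti a_gt1 a_coprime gen_prod numsgS gensS.
split; exists (fun i => (a i).-1); split=> // i hi.
  exact: tau_unique_betti.
exact: alpha_unique_betti.
Qed.

Section Example.

Definition ex_gens : seq nat := [:: 4; 6; 13].
Local Notation ex_S := (inSG ex_gens).

Lemma ex_sum (c : nat -> nat) :
  \sum_(1 <= i < size ex_gens) c i * nth 0 ex_gens i = c 1 * 6 + c 2 * 13.
Proof. by rewrite big_ltn // big_ltn // big_geq // addn0. Qed.

Lemma ex_memberP x : ex_S x <-> exists p q r, x = p * 4 + q * 6 + r * 13.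
Proof.
have sumE c : \sum_(0 <= i < size ex_gens) c i * nth 0 ex_gens i =
    c 0 * 4 + (c 1 * 6 + c 2 * 13) by rewrite big_ltn // -ex_sum.
rewrite inSGP; split.
  by case=> c; rewrite sumE => ->; exists (c 0), (c 1), (c 2); lia.
case=> p [q [r ->]]; exists (nth 0 [:: p; q; r]); rewrite sumE /=; lia.
Qed.

Lemma ex_large x : 16 <= x -> ex_S x.
Proof.
move=> hx; apply/ex_memberP.
have := divn_eq (x - 16) 4; have := ltn_mod (x - 16) 4.
move: (_ %/ 4) (_ %% 4) => q [|[|[|[|r]]]] // _ hq.
- by exists (4 + q), 0, 0; lia.
- by exists (q + 1), 0, 1; lia.
- by exists (q + 3), 1, 0; lia.
- by exists q, 1, 1; lia.
Qed.

Lemma ex_numsg : is_numsg ex_S.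
Proof.
split => //; last by exists 16 => x; apply: ex_large.
move=> x y /ex_memberP [p [q [r ->]]] /ex_memberP [p' [q' [r' ->]]].
by apply/ex_memberP; exists (p + p'), (q + q'), (r + r'); lia.
Qed.

Lemma ex_indecomposable x :
  ~~ has (fun b => ex_S b && ex_S (x - b)) (iota 1 x.-1) ->
  ~ exists b c, [/\ 0 < b, 0 < c, ex_S b, ex_S c & x = b + c].
Proof.
move=> /hasPn hx [b [c [b0 c0 Sb Sc e]]].
have := hx b; rewrite mem_iota (_ : x - b = c); last by lia.
by rewrite Sb Sc => /(_ ltac:(lia)).
Qed.

Lemma ex_minimal_gens : minimal_gens ex_S ex_gens.
Proof.
split=> // x; split.
  rewrite !inE => /or3P [] /eqP ->;
    (split=> //; apply: ex_indecomposable; vm_compute; reflexivity).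
case=> x0 /ex_memberP [p [q [r e]]] hnd.
case: (boolP (x \in ex_gens)) => // /negP hx; exfalso; apply: hnd.
have [hx4 hx6 hx13] : [/\ x != 4, x != 6 & x != 13].
  by split; apply/eqP => hx'; apply: hx; rewrite hx' !inE.
case: (posnP p) => p0; last first.
  exists 4, (x - 4); split => //; try lia.
  by apply/ex_memberP; exists (p - 1), q, r; lia.
case: (posnP q) => q0; last first.
  exists 6, (x - 6); split => //; try lia.
  by apply/ex_memberP; exists p, (q - 1), r; lia.
exists 13, (x - 13); split => //; try lia.
by apply/ex_memberP; exists p, q, (r - 1); lia.
Qed.

Lemma ex_apery s : apery ex_S ex_gens s = (s \in [:: 0; 6; 13; 19]).
Proof.
case: (ltnP s 20) => hs.
  by do 20! (case: s hs => [|s] hs; first by vm_compute).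
rewrite /apery (_ : nth 0 ex_gens 0 = 4) // (ex_large (x := s - 4)); last by lia.
rewrite ltnNge (leq_trans _ hs) // andbF !inE; symmetry; apply/negbTE; lia.
Qed.

Lemma ex_apery_box : apery_box ex_S ex_gens (fun _ => 1).
Proof.
move=> s; rewrite ex_apery; split.
  rewrite !inE => /or4P [] /eqP ->.
  - by exists (fun _ => 0); split => //; rewrite ex_sum.
  - by exists (fun i => i == 1); split; [move=> i _; case: (i == 1) | rewrite ex_sum].
  - by exists (fun i => i != 1); split; [move=> i _; case: (i != 1) | rewrite ex_sum].
  - by exists (fun _ => 1); split => //; rewrite ex_sum.
case=> lam [hl ->]; rewrite ex_sum.
have := hl 1 isT; have := hl 2 isT.
by case: (lam 1) => [|[|]] //; case: (lam 2) => [|[|]].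
Qed.

Lemma ex_tau i : 0 < i < size ex_gens -> is_tau ex_gens i 1.
Proof. by case: i => [|[|[|i]]] // _; split => //; case => [|[|h]]. Qed.

Lemma ex_alpha i : 0 < i < size ex_gens -> is_alpha ex_S ex_gens i 1.
Proof.
case: i => [|[|[|i]]] // _; (split; first by rewrite ex_apery);
  move=> h; rewrite ex_apery /= !inE => /or4P [] /eqP; lia.
Qed.

(* 13 = a_0 a_1 with a_0, a_1 > 1 is impossible since 13 is prime. *)
Lemma ex_not_unique_betti : ~ unique_betti ex_gens.
Proof.
case=> a [a_gt1 _ gen_prod].
have := gen_prod 2 isT.
rewrite big_mkcond big_ltn // big_ltn // big_ltn // big_geq //= !muln1 => e.
have /primeP [_ /(_ (a 0))] : prime 13 by [].
have := a_gt1 0 isT; have := a_gt1 1 isT.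
rewrite {1}e dvdn_mulr // => a1_gt1 a0_gt1 /(_ isT) /orP [] /eqP; nia.
Qed.

End Example.

Theorem mainTheorem5 :
  (forall (S : pred nat) (g : seq nat),
     is_numsg S -> minimal_gens S g -> unique_betti g ->
     telescopic S g /\ alpha_rectangular S g) /\
  (let S := inSG [:: 4; 6; 13] in
   [/\ is_numsg S /\ minimal_gens S [:: 4; 6; 13],
       plane_branch S [:: 4; 6; 13], telescopic S [:: 4; 6; 13],
       alpha_rectangular S [:: 4; 6; 13] & ~ unique_betti [:: 4; 6; 13]]).
Proof.
split; first exact: unique_betti_telescopic_rectangular.
split.
- exact: (conj ex_numsg ex_minimal_gens).
- exists (fun _ => 1); split; [exact: ex_tau | exact: ex_apery_box |].
  by case=> [|[|[|i]]].
- by exists (fun _ => 1); split; [exact: ex_tau | exact: ex_apery_box].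
- by exists (fun _ => 1); split; [exact: ex_alpha | exact: ex_apery_box].
- exact: ex_not_unique_betti.
Qed.
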